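(* Fix $\varepsilon>0$, $w\in\mathbb{R}^L$ and $j\in[L]$. There is a unique $a\in\mathbb{R}$ satisfying $$w_j=a+\varepsilon/\sqrt2-\sum_{k\neq j}(w_k-a)_+.$$ Moreover, defining $v\in\mathbb{R}^L$ by $v_j=a+\varepsilon/\sqrt2$ and $v_k=\min\{a,w_k\}$ for $k\neq j$, $v$ is the (unique) Euclidean projection of $w$ onto $R_j^\varepsilon$, i.e. $v=\arg\min_{u\in R_j^\varepsilon}\|w-u\|$.
   Context: $(a)_+=\max\{a,0\}$, $\|\cdot\|$ the Euclidean norm, and $R_j^\varepsilon=\{u\in\mathbb{R}^L: u_j\ge\max_{\ell\neq j}u_\ell+\varepsilon/\sqrt2\}$. *)

From mathcomp Require Import all_boot all_order all_algebra.
From mathcomp Require Import reals.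
Set Implicit Arguments. Unset Strict Implicit. Unset Printing Implicit Defensive.
Import Order.TTheory GRing.Theory Num.Theory.
Local Open Scope ring_scope.

Definition pospart {R : realType} (a : R) : R := Num.max a 0.

Definition enorm {R : realType} {L : nat} (x : 'rV[R]_L) : R :=
  Num.sqrt (\sum_(i < L) x ord0 i ^+ 2).

(* R_j^eps = { u : u_j >= max_{l<>j} u_l + eps/sqrt 2 };
   with the max over the empty set read as -oo, this is literally
   "u_j >= u_l + eps/sqrt 2 for every l <> j". *)
Definition region {R : realType} {L : nat} (eps : R) (j : 'I_L) : 'rV[R]_L -> Prop :=
  fun u => forall l : 'I_L, l != j -> u ord0 l + eps / Num.sqrt 2 <= u ord0 j.

Definition is_unique_proj {R : realType} {L : nat} (S : 'rV[R]_L -> Prop)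
  (w v : 'rV[R]_L) : Prop :=
  S v /\ forall u, S u -> u <> v -> enorm (w - v) < enorm (w - u).

(* The map a |-> a + eps/sqrt 2 - sum_(k <> j) (w_k - a)_+ has slope at least
   1 and is Lipschitz, so it is a bijection of the reals; this gives the unique
   a.  The vector v lies in R_j^eps, and the variational inequality
   <w - v, v - u> >= 0 holds for every u in R_j^eps: w - v is -S e_j + sum_k
   (w_k - a)_+ e_k with S = sum_k (w_k - a)_+, and v_k = a wherever
   (w_k - a)_+ > 0, so the inner product equals
   sum_k (w_k - a)_+ (u_j - u_k - eps/sqrt 2) >= 0.  Expanding
   |w - u|^2 = |w - v|^2 + |v - u|^2 + 2 <w - v, v - u> then makes v the strict
   minimiser. *)
From mathcomp Require Import all_boot all_order all_algebra.
From mathcomp Require Import reals classical_sets.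
From mathcomp Require Import ring lra.
Set Implicit Arguments. Unset Strict Implicit. Unset Printing Implicit Defensive.
Import Order.TTheory GRing.Theory Num.Theory.
Local Open Scope ring_scope.

Section PosPart.
Variable R : realType.
Implicit Types x y a : R.

Lemma pospart_ge0 x : 0 <= pospart x.
Proof. by rewrite /pospart le_max lexx orbT. Qed.

Lemma pospart_ge x : x <= pospart x.
Proof. by rewrite /pospart le_max lexx. Qed.

Lemma pospart_le x y : x <= y -> pospart x <= pospart y.
Proof. by move=> xy; rewrite /pospart ge_max !le_max xy lexx orbT. Qed.

Lemma pospart_lipschitz x y : x <= y -> pospart y <= pospart x + (y - x).
Proof.
move=> xy; rewrite {1}/pospart ge_max.
by have := pospart_ge x; have := pospart_ge0 x; move=> *; apply/andP; split; lra.
Qed.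

Lemma subr_min_pospart x a : x - Num.min a x = pospart (x - a).
Proof.
rewrite /pospart; case: (leP a x) => ax.
  by rewrite max_l // subr_ge0.
by rewrite max_r ?subrr // subr_le0 ltW.
Qed.

Lemma pospart_mulr_min x a : pospart (x - a) * (Num.min a x - a) = 0.
Proof.
rewrite /pospart; case: (leP a x) => ax; first by rewrite subrr mulr0.
by rewrite max_r ?mul0r // subr_le0 ltW.
Qed.

End PosPart.

Section ExpandingLipschitz.
Variables (R : realType) (f : R -> R) (M : R).
Hypothesis f_expanding : forall a b, a <= b -> b - a <= f b - f a.
Hypothesis f_lipschitz : forall a b, a <= b -> f b - f a <= M * (b - a).

Lemma expanding_ltr a b : a < b -> f a < f b.
Proof. by move=> ab; have := f_expanding (ltW ab); lra. Qed.

Lemma expanding_lipschitz_surjective y : exists x, f x = y.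
Proof.
have M_gt0 : 0 < M.
  by have := f_expanding (@ler01 R); have := f_lipschitz (@ler01 R); lra.
pose A : set R := fun x => f x <= y.
have A_ub x : A x -> x <= Num.max 0 (y - f 0).
  move=> Ax; rewrite le_max; case: (leP x 0) => //= x_gt0.
  by have := f_expanding (ltW x_gt0); move: Ax; rewrite /A; lra.
have hsA : has_sup A.
  split; last by exists (Num.max 0 (y - f 0)) => x; apply: A_ub.
  exists (Num.min 0 (y - f 0)); rewrite /A.
  have x0_le0 : Num.min 0 (y - f 0) <= 0 by rewrite ge_min lexx.
  have x0_le : Num.min 0 (y - f 0) <= y - f 0 by rewrite ge_min lexx orbT.
  by have := f_expanding x0_le0; lra.
set s := sup A.
have s_ub := sup_upper_bound hsA.
exists s; apply/eqP; rewrite eq_le !leNgt; apply/andP; split; apply/negP => hlt.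
- pose d := (f s - y) / M.
  have d_gt0 : 0 < d by rewrite divr_gt0 // subr_gt0.
  have [e Ae se] : exists2 e, A e & s - d < e := sup_adherent d_gt0 hsA.
  have es : e <= s := s_ub e Ae.
  have : M * (s - e) < M * d by rewrite ltr_pM2l //; lra.
  rewrite [M * d]mulrC divfK ?gt_eqF //.
  by have := f_lipschitz es; move: Ae; rewrite /A; lra.
- pose d := (y - f s) / M.
  have d_gt0 : 0 < d by rewrite divr_gt0 // subr_gt0.
  have Asd : A (s + d).
    have := f_lipschitz (_ : s <= s + d); rewrite /A addrAC subrr add0r.
    by rewrite [M * d]mulrC divfK ?gt_eqF //; move=> /(_ ltac:(lra)); lra.
  by have : s + d <= s := s_ub _ Asd; lra.
Qed.

Lemma expanding_lipschitz_bijective y : exists! x, f x = y.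
Proof.
have [x fx] := expanding_lipschitz_surjective y.
exists x; split=> // x' fx'; apply/eqP; rewrite eq_le !leNgt.
by apply/andP; split; apply/negP => /expanding_ltr; lra.
Qed.

End ExpandingLipschitz.

Section Projection.
Variables (R : realType) (L : nat).
Implicit Types x y u v w : 'rV[R]_L.

Definition dotr x y : R := \sum_(i < L) x ord0 i * y ord0 i.

Lemma enorm_dotr x : enorm x = Num.sqrt (dotr x x).
Proof. by rewrite /enorm /dotr; under eq_bigr do rewrite expr2. Qed.

Lemma dotr_ge0 x : 0 <= dotr x x.
Proof. by apply: sumr_ge0 => i _; rewrite -expr2 sqr_ge0. Qed.

Lemma dotr_gt0 x : x != 0 -> 0 < dotr x x.
Proof.
move=> x_neq0.
have [i xi] : exists i, x ord0 i != 0.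
  apply/existsP; apply: contraR x_neq0; rewrite negb_exists => /forallP x0.
  by apply/eqP/rowP => i; rewrite mxE; apply/eqP; rewrite -[_ == _]negbK x0.
rewrite /dotr (bigD1 i) //= -expr2.
have : 0 < x ord0 i ^+ 2 by rewrite lt_def sqr_ge0 expf_neq0.
have : 0 <= \sum_(k < L | k != i) x ord0 k * x ord0 k.
  by apply: sumr_ge0 => k _; rewrite -expr2 sqr_ge0.
lra.
Qed.

Lemma dotrDD x y : dotr (x + y) (x + y) = dotr x x + dotr y y + 2 * dotr x y.
Proof.
rewrite /dotr mulr_sumr -!big_split /=.
by apply: eq_bigr => i _; rewrite !mxE; ring.
Qed.

Lemma is_unique_proj_variational (S : 'rV[R]_L -> Prop) w v :
  S v -> (forall u, S u -> 0 <= dotr (w - v) (v - u)) -> is_unique_proj S w v.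
Proof.
move=> Sv v_var; split=> // u Su u_neq_v.
have vu_gt0 : 0 < dotr (v - u) (v - u).
  by apply: dotr_gt0; rewrite subr_eq0; apply/eqP => /esym.
have var_u := v_var u Su; have wv_ge0 := dotr_ge0 (w - v).
have -> : w - u = (w - v) + (v - u) by rewrite addrA subrK.
by rewrite !enorm_dotr [dotr (_ + (v - u)) _]dotrDD ltr_sqrt; lra.
Qed.

End Projection.

Section WaterLevel.
Variables (R : realType) (L : nat) (w : 'rV[R]_L) (j : 'I_L).

Definition excess (a : R) : R := \sum_(k < L | k != j) pospart (w ord0 k - a).

Lemma excess_le a b : a <= b -> excess b <= excess a.
Proof. by move=> ab; apply: ler_sum => k _; apply: pospart_le; lra. Qed.

Lemma excess_lipschitz a b : a <= b -> excess a <= excess b + (b - a) *+ L.-1.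
Proof.
move=> ab; have -> : (b - a) *+ L.-1 = \sum_(k < L | k != j) (b - a).
  by rewrite sumr_const cardC1 card_ord.
rewrite -big_split /=.
apply: ler_sum => k _; have := pospart_lipschitz (_ : w ord0 k - b <= w ord0 k - a).
by move=> /(_ ltac:(lra)); lra.
Qed.

Lemma water_level_unique (c y : R) : exists! a, y = a + c - excess a.
Proof.
have f_expanding a b : a <= b -> b - a <= (b + c - excess b) - (a + c - excess a).
  by move=> ab; have := excess_le ab; lra.
have f_lipschitz a b : a <= b ->
    (b + c - excess b) - (a + c - excess a) <= (1 + L.-1%:R) * (b - a).
  by move=> ab; have := excess_lipschitz ab; rewrite mulrDl mul1r mulr_natl; lra.
have [a [fa a_uniq]] := expanding_lipschitz_bijective f_expanding f_lipschitz y.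
by exists a; split=> [|b fb]; [rewrite fa | apply: a_uniq; rewrite fb].
Qed.

Variable eps : R.
Let c := eps / Num.sqrt 2.

Definition water_row (a : R) : 'rV[R]_L :=
  \row_(k < L) (if k == j then a + c else Num.min a (w ord0 k)).

Lemma water_row_region a : region eps j (water_row a).
Proof. by move=> l lj; rewrite !mxE eqxx (negbTE lj) lerD2r ge_min lexx. Qed.

Lemma water_row_variational a u : w ord0 j = a + c - excess a ->
  region eps j u -> 0 <= dotr (w - water_row a) (water_row a - u).
Proof.
move=> level u_reg; rewrite /dotr (bigD1 j) //= !mxE eqxx.
have -> : w ord0 j - (a + c) = - excess a by rewrite level; ring.
rewrite /excess mulNr mulr_suml addrC -sumrB; apply: sumr_ge0 => k kj.
rewrite !mxE (negbTE kj) subr_min_pospart.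
have := pospart_mulr_min (w ord0 k) a; have := pospart_ge0 (w ord0 k - a).
have : u ord0 k + c <= u ord0 j := u_reg k kj.
set p := pospart _; set m := Num.min _ _ => ukj p_ge0 pm0.
have -> : p * (m - u ord0 k) - p * (a + c - u ord0 j)
        = p * (u ord0 j - u ord0 k - c) + p * (m - a) by ring.
by rewrite pm0 addr0 mulr_ge0 // subr_ge0 lerBrDr addrC.
Qed.

End WaterLevel.

Theorem lemma3 (R : realType) (L : nat) (eps : R) (w : 'rV[R]_L) (j : 'I_L) :
  0 < eps ->
  (exists! a : R,
     w ord0 j = a + eps / Num.sqrt 2 - \sum_(k < L | k != j) pospart (w ord0 k - a)) /\
  (forall a : R,
     w ord0 j = a + eps / Num.sqrt 2 - \sum_(k < L | k != j) pospart (w ord0 k - a) ->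
     is_unique_proj (region eps j) w
       (\row_(k < L) (if k == j then a + eps / Num.sqrt 2 else Num.min a (w ord0 k)))).
Proof.
move=> _; split; first exact: water_level_unique.
move=> a level; change (is_unique_proj (region eps j) w (water_row w j eps a)).
apply: is_unique_proj_variational; first exact: water_row_region.
by move=> u; apply: water_row_variational.
Qed.
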